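(* Let $X$ be a commutative topological free algebra over $\mathbb{K}$ with a set of free generators $A$. Let $B,C$ be a partition of $A$ and suppose $\alpha=|C|$ is infinite with $\alpha\ge w(X)$. Let $Y=\langle B\rangle$. Then $X\setminus Y$ is strongly $\alpha$-dense-algebrable, i.e., there is a set of free generators $F\subset X$ with $|F|=\alpha$ such that $\langle F\rangle$ is dense in $X$ and $\langle F\rangle\subset (X\setminus Y)\cup\{0\}$.
   Context: Algebras are associative linear algebras over $\mathbb{K}$ ($\mathbb{R}$ or $\mathbb{C}$); a topological algebra is an algebra with a topology making sum, product and scalar multiplication continuous. $w(X)$ is the smallest cardinality of a base of the topology. $\langle S\rangle$ is the subalgebra generated by $S$. With $\mathbb{P}_n$ the polynomials in $n$ variables without constant term, a subset $S$ of a commutative algebra is a set of free generators (SFG) if $P(x_1,\dots,x_n)\ne0$ for every $n$, every non-zero $P\in\mathbb{P}_n$ and all pairwise distinct $x_1,\dots,x_n\in S$. $X$ is a commutative (topological) free algebra with SFG $A$ if $A$ is an SFG and $X=\langle A\rangle$. A subset $M$ of a commutative topological algebra is strongly $\alpha$-dense-algebrable if $M\cup\{0\}$ contains a dense subalgebra of the form $\langle F\rangle$ with $F$ an SFG of cardinality $\alpha$ (a dense $\alpha$-generated free subalgebra). *)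

From HB Require Import structures.
From mathcomp Require Import all_boot all_order all_algebra.
From mathcomp Require Import all_classical all_reals all_analysis.
From mathcomp Require Import complex.
From mathcomp Require mpoly.
Export (canonicals, coercions) mpoly.

Set Implicit Arguments.
Unset Strict Implicit.
Unset Printing Implicit Defensive.

Import Order.TTheory GRing.Theory Num.Theory.
Import numFieldNormedType.Exports.
Local Open Scope classical_set_scope.
Local Open Scope ring_scope.

Definition Kfield (R : realType) (b : bool) : numFieldType :=
  if b then (R : numFieldType) else (complex R : numFieldType).

HB.mixin Record Lmodule_isNUComAlg (K : numFieldType) V of GRing.Lmodule K V := {
  nmul : V -> V -> V;
  nmulA : associative nmul;
  nmulC : commutative nmul;
  nmulDl : left_distributive nmul +%R;
  nmulZl : forall (a : K) (u v : V), nmul (a *: u) v = a *: nmul u v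
}.

#[short(type="nuComAlgType")]
HB.structure Definition NUComAlg (K : numFieldType) :=
  {V of Lmodule_isNUComAlg K V & GRing.Lmodule K V}.

#[short(type="topNUComAlgType")]
HB.structure Definition TopNUComAlg (K : numFieldType) :=
  {V of NUComAlg K V & Topological V}.

Definition topological_algebra (K : numFieldType) (X : topNUComAlgType K) :=
  [/\ continuous (fun p : X * X => p.1 + p.2),
      continuous (fun p : X * X => nmul p.1 p.2)
    & continuous (fun p : K * X => p.1 *: p.2)].

Definition is_subalgebra (K : numFieldType) (X : nuComAlgType K) (Y : set X) :=
  [/\ Y 0,
      (forall u v, Y u -> Y v -> Y (u + v)),
      (forall (a : K) u, Y u -> Y (a *: u))
    & (forall u v, Y u -> Y v -> Y (nmul u v))].

Definition gen_subalg (K : numFieldType) (X : nuComAlgType K) (S : set X) : set X :=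
  \bigcap_(Y in [set Y | is_subalgebra Y /\ S `<=` Y]) Y.

(* Non-unital product of a nonempty list of factors (0 for the empty list). *)
Definition nprod (K : numFieldType) (X : nuComAlgType K) (s : seq X) : X :=
  if s is a :: l then foldl nmul a l else 0.

(* Evaluation of a monomial x^m = prod_i x_i^(m i) (m <> 0). *)
Definition mono_eval (K : numFieldType) (X : nuComAlgType K) (n : nat)
    (m : mpoly.multinom n) (x : 'I_n -> X) : X :=
  nprod (flatten [seq nseq (mpoly.fun_of_multinom m i) (x i) | i <- enum 'I_n]).

(* Evaluation P(x_1, ..., x_n) of a polynomial without constant term. *)
Definition peval (K : numFieldType) (X : nuComAlgType K) (n : nat)
    (P : mpoly.mpoly n K) (x : 'I_n -> X) : X :=
  \sum_(m <- mpoly.msupp P) mpoly.mcoeff m P *: mono_eval m x.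

Definition no_const (K : numFieldType) (n : nat) (P : mpoly.mpoly n K) :=
  mpoly.mcoeff (@mpoly.mnm0 n) P = 0.

Definition SFG (K : numFieldType) (X : nuComAlgType K) (S : set X) :=
  forall (n : nat) (P : mpoly.mpoly n K), no_const P -> P <> 0 ->
  forall x : 'I_n -> X, injective x -> (forall i, S (x i)) -> peval P x <> 0.

Definition free_with_SFG (K : numFieldType) (X : nuComAlgType K) (A : set X) :=
  SFG A /\ gen_subalg A = setT.

Definition is_base (T : topologicalType) (B : set_system T) :=
  (forall U, B U -> open U) /\
  (forall U, open U -> exists2 D, D `<=` B & U = \bigcup_(V in D) V).

(* w(X) <= |C| : some base of X has cardinality at most |C|. *)
Definition weight_le (T : topologicalType) (U : Type) (C : set U) :=
  exists2 B : set_system T, is_base B & (B #<= C)%card.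

Definition strongly_dense_algebrable (K : numFieldType) (X : topNUComAlgType K)
    (U : Type) (C : set U) (M : set X) :=
  exists F : set X, [/\ SFG F, (F #= C)%card, dense (gen_subalg F)
                      & gen_subalg F `<=` M `|` [set 0]].

(* Fix an injection U |-> g U of a base of X into C.  A nonempty basic open set
   U contains a point p = R(a) with R a polynomial in generators from A, hence
   also the point f (g U) := p + s (g U)^N for s <> 0 small (continuity of the
   operations) and N larger than the degree of R; put f c := c when c is not
   of the form g U.  Then F := f(C) has the cardinality of C and <F> meets every
   basic open set.  For distinct c_1, ..., c_k in C and a nonzero P without
   constant term, expand P(f c_1, ..., f c_k) in the free generators: the
   monomial of P of largest weighted degree (c_j weighted by its exponent N)
   yields a monomial involving some c_j with nonzero coefficient.  So
   P(f c_1, ..., f c_k) is neither 0 nor a polynomial in B, which shows at once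
   that F is a set of free generators, that f is injective, and that <F>
   meets <B> only in 0. *)
From HB Require Import structures.
From mathcomp Require Import all_boot all_order all_algebra.
From mathcomp Require Import mpoly zify.
From mathcomp Require Import all_classical all_reals all_analysis.
Import numFieldNormedType.Exports.
Set Implicit Arguments.
Unset Strict Implicit.
Unset Printing Implicit Defensive.
Import Order.TTheory GRing.Theory Num.Theory.
Local Open Scope classical_set_scope.
Local Open Scope ring_scope.

Section TopMonomial.
Variables (K : idomainType) (n : nat).
Implicit Types (p q : {mpoly K[n]}) (c d : K) (M : 'X_{1..n}).

Lemma msizeD_leq p q (d : nat) :
  (msize p <= d)%N -> (msize q <= d)%N -> (msize (p + q) <= d)%N.
Proof.
by move=> hp hq; apply: leq_trans (msizeD_le _ _) _; rewrite geq_max hp hq.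
Qed.

Lemma msizeM_le_pred p q : (msize (p * q) <= (msize p + msize q).-1)%N.
Proof.
have [->|p0] := eqVneq p 0; first by rewrite mul0r msize0.
have [->|q0] := eqVneq q 0; first by rewrite mulr0 msize0.
by rewrite msizeM.
Qed.

Lemma msizeZX c M : (msize (c *: 'X_[M]) <= (mdeg M).+1)%N.
Proof. by apply: leq_trans (msizeZ_le _ _) _; rewrite msizeX. Qed.

(* p = c X^M + (terms of total degree < |M|); recall that msize is degree + 1. *)
Definition top_monomial p c M := (msize (p - c *: 'X_[M]) <= mdeg M)%N.

Lemma top_monomial_msize p c M : top_monomial p c M -> (msize p <= (mdeg M).+1)%N.
Proof.
move=> h; rewrite -(subrK (c *: 'X_[M]) p); apply: msizeD_leq (msizeZX _ _).
exact: leq_trans h _.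
Qed.

Lemma top_monomialM p q c d M M' : top_monomial p c M -> top_monomial q d M' ->
  top_monomial (p * q) (c * d) (M + M')%MM.
Proof.
move=> hp hq; rewrite /top_monomial mdegD.
have -> : p * q - (c * d) *: 'X_[M + M'] =
    (p - c *: 'X_[M]) * q + (c *: 'X_[M]) * (q - d *: 'X_[M']).
  by rewrite mulrBl mulrBr addrA subrK -scalerAl -scalerAr scalerA -mpolyXD.
apply: msizeD_leq; apply: leq_trans (msizeM_le_pred _ _) _.
  have := leq_add hp (top_monomial_msize hq); lia.
have := leq_add (msizeZX c M) hq; lia.
Qed.

Lemma top_monomial1 : top_monomial 1 1 0%MM.
Proof. by rewrite /top_monomial mpolyX0 scale1r subrr msize0. Qed.

Lemma top_monomial_prod k (p : 'I_k -> {mpoly K[n]}) (c : 'I_k -> K)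
    (M : 'I_k -> 'X_{1..n}) :
  (forall j, top_monomial (p j) (c j) (M j)) ->
  top_monomial (\prod_j p j) (\prod_j c j) (\sum_j M j)%MM.
Proof.
move=> h; elim/big_rec3: _ => [|j p' c' M' _ hp]; first exact: top_monomial1.
exact: top_monomialM.
Qed.

Lemma top_monomialX p c M e :
  top_monomial p c M -> top_monomial (p ^+ e) (c ^+ e) (M *+ e)%MM.
Proof.
move=> h; elim: e => [|e IH]; first by rewrite !expr0 mulm0n top_monomial1.
by rewrite !exprS mulmS; apply: top_monomialM.
Qed.

Lemma mcoeff_top_monomial p c M M' : top_monomial p c M -> (mdeg M <= mdeg M')%N ->
  p@_M' = c * (M == M')%:R.
Proof.
move=> h le; rewrite -(subrK (c *: 'X_[M]) p) mcoeffD mcoeffZ mcoeffX.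
by rewrite memN_msupp_eq0 ?add0r //; apply: msize_mdeg_ge; apply: leq_trans h le.
Qed.

Lemma mcoeff0_Xn (j : 'I_n) (N : nat) :
  (0 < N)%N -> ('X_j ^+ N : {mpoly K[n]})@_0%MM = 0.
Proof.
move=> N0; rewrite mpolyXn mcoeffX; case: eqP => // /(congr1 mdeg).
by rewrite mdegMn mdeg1 mul1n mdeg0 => N0'; rewrite N0' in N0.
Qed.

Lemma top_monomial_perturb p c (j : 'I_n) (N : nat) :
  (msize p <= N)%N -> top_monomial (p + c *: 'X_j ^+ N) c (U_(j) *+ N)%MM.
Proof. by move=> h; rewrite /top_monomial mpolyXn addrK mdegMn mdeg1 mul1n. Qed.

End TopMonomial.

Lemma mnm_neq0 n (m : 'X_{1..n}) : m != 0%MM -> exists i, m i != 0%N.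
Proof.
move=> m0; apply/existsP; apply: contraNT m0 => /existsPn m_eq0.
by apply/eqP/mnmP => i; rewrite mnm0E; apply/eqP/negPn/m_eq0.
Qed.

Lemma seq_argmax (T : eqType) (s : seq T) (W : T -> nat) x0 :
  x0 \in s -> exists2 x, x \in s & forall y, y \in s -> (W y <= W x)%N.
Proof.
elim: s x0 => [//|a [|b s] IH] x0 _.
  by exists a; rewrite ?mem_seq1 // => y; rewrite mem_seq1 => /eqP ->.
have [x xs Hx] := IH b (mem_head _ _).
have [le_ax|lt_xa] := leqP (W a) (W x).
  exists x; first by rewrite in_cons xs orbT.
  by move=> y; rewrite in_cons => /predU1P[->|/Hx].
exists a; first exact: mem_head.
by move=> y; rewrite in_cons => /predU1P[->//|/Hx/leq_trans]; apply; apply: ltnW.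
Qed.

Section Perturbation.
Variables (K : idomainType) (k n : nat).
Variables (tau : 'I_k -> 'I_n) (N : 'I_k -> nat) (t : 'I_k -> K)
  (R : 'I_k -> {mpoly K[n]}).
Hypotheses (tau_inj : injective tau) (N_gt0 : forall j, (0 < N j)%N)
  (t_neq0 : forall j, t j != 0) (msize_R : forall j, (msize (R j) <= N j)%N).

Definition perturb_tuple : k.-tuple {mpoly K[n]} :=
  [tuple R j + t j *: 'X_(tau j) ^+ N j | j < k].

Definition perturb_mnm (m : 'X_{1..k}) : 'X_{1..n} :=
  (\sum_(j < k) (U_(tau j) *+ N j) *+ m j)%MM.

Lemma perturb_mnmE m j : perturb_mnm m (tau j) = (N j * m j)%N.
Proof.
rewrite /perturb_mnm mnm_sumE (bigD1 j) //= big1 ?addn0.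
  by rewrite !mulmnE mnm1E eqxx mul1n mulnC.
by move=> j' /negbTE hj; rewrite !mulmnE mnm1E (inj_eq tau_inj) hj.
Qed.

Lemma perturb_mnm_inj : injective perturb_mnm.
Proof.
move=> m1 m2 h; apply/mnmP => j; apply/eqP.
by rewrite -(eqn_pmul2l (N_gt0 j)) -!perturb_mnmE h.
Qed.

Lemma top_monomial_perturb_comp (m : 'X_{1..k}) :
  top_monomial ('X_[m] \mPo perturb_tuple) (\prod_(j < k) t j ^+ m j) (perturb_mnm m).
Proof.
rewrite comp_mpolyX; apply: top_monomial_prod => j.
by rewrite tnth_mktuple; apply/top_monomialX/top_monomial_perturb.
Qed.

(* The monomial of P whose image under [perturb_mnm] has the largest degree
   survives the substitution. *)
Lemma mcoeff_comp_perturb (P : {mpoly K[k]}) : P != 0 -> P@_0%MM = 0 ->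
  exists2 M : 'X_{1..n}, exists j, M (tau j) != 0%N & (P \mPo perturb_tuple)@_M != 0.
Proof.
move=> P_neq0 P0.
have [ms msP ms_max] := seq_argmax (fun m => mdeg (perturb_mnm m)) (mlead_supp P_neq0).
exists (perturb_mnm ms).
  have /mnm_neq0 [j msj] : ms != 0%MM.
    by apply: contraTneq msP => ->; rewrite mcoeff_msupp P0 eqxx.
  by exists j; rewrite perturb_mnmE muln_eq0 negb_or msj -lt0n N_gt0.
have top m := mcoeff_top_monomial (top_monomial_perturb_comp m).
rewrite comp_mpolyEX raddf_sum /= (bigD1_seq ms) ?msupp_uniq //= big1_seq ?addr0.
  rewrite mcoeffZ top // eqxx mulr1 mulf_neq0 -?mcoeff_msupp //.
  by apply/prodf_neq0 => j _; rewrite expf_neq0.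
move=> m /andP[m_ms mP]; rewrite mcoeffZ top ?ms_max //.
by rewrite (inj_eq perturb_mnm_inj) (negbTE m_ms) !mulr0.
Qed.

End Perturbation.

Section Rename.
Variables (K : idomainType) (n n' : nat) (sigma : 'I_n -> 'I_n').
Implicit Types (P : {mpoly K[n]}) (m : 'X_{1..n}).

Definition mrename P : {mpoly K[n']} := P \mPo [tuple 'X_(sigma i) | i < n].

Definition mnm_rename m : 'X_{1..n'} := (\sum_(i < n) U_(sigma i) *+ m i)%MM.

Lemma mrenameE P : mrename P = \sum_(m <- msupp P) P@_m *: 'X_[mnm_rename m].
Proof.
rewrite /mrename comp_mpolyEX; apply: eq_bigr => m _; congr (_ *: _).
rewrite comp_mpolyX /mnm_rename -mprodXnE; apply: eq_bigr => i _.
by rewrite tnth_mktuple.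
Qed.

Lemma msupp_mrename P (M : 'X_{1..n'}) :
  M \in msupp (mrename P) -> exists2 m, m \in msupp P & M = mnm_rename m.
Proof.
rewrite mrenameE => /msupp_sum_le /flattenP [s /mapP [m]].
rewrite mem_filter /= => mP -> /msuppZ_le; rewrite msuppX mem_seq1 => /eqP ->.
by exists m.
Qed.

Lemma mdeg_mnm_rename m : mdeg (mnm_rename m) = mdeg m.
Proof.
rewrite /mnm_rename mdeg_sum mdegE; apply: eq_bigr => i _.
by rewrite mdegMn mdeg1 mul1n.
Qed.

Lemma msize_mrename P : (msize (mrename P) <= msize P)%N.
Proof.
rewrite msizeE; apply/bigmax_leqP_seq => M /msupp_mrename [m mP ->] _.
by rewrite mdeg_mnm_rename; apply: msize_mdeg_lt.
Qed.

Lemma mrename_no_const P : P@_0%MM = 0 -> (mrename P)@_0%MM = 0.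
Proof.
move=> P0; apply: memN_msupp_eq0; apply/negP => /msupp_mrename [m mP /esym e].
have /eqP : mdeg m = 0%N by rewrite -mdeg_mnm_rename e mdeg0.
by rewrite mdeg_eq0 => /eqP m0; move: mP; rewrite m0 mcoeff_msupp P0 eqxx.
Qed.

Lemma mcoeff_mrename_out P (M : 'X_{1..n'}) j :
  (forall i, sigma i != j) -> M j != 0%N -> (mrename P)@_M = 0.
Proof.
move=> sigmaj Mj; apply: memN_msupp_eq0; apply/negP => /msupp_mrename [m _ eM].
move: Mj; rewrite eM /mnm_rename mnm_sumE big1 ?eqxx // => i _.
by rewrite mulmnE mnm1E (negbTE (sigmaj i)).
Qed.

End Rename.

Section DropConst.
Variables (K : idomainType) (n : nat).
Implicit Types (P : {mpoly K[n]}).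

Definition drop_const P := P - (P@_0%MM)%:MP.

Lemma mcoeff0_drop_const P : (drop_const P)@_0%MM = 0.
Proof. by rewrite mcoeffB mcoeffC eqxx mulr1 subrr. Qed.

Lemma mcoeff_drop_const P M : M != 0%MM -> (drop_const P)@_M = P@_M.
Proof. by move=> M0; rewrite mcoeffB mcoeffC (negbTE M0) mulr0 subr0. Qed.

End DropConst.

Section NUComAlgTheory.
Variables (K : numFieldType) (X : nuComAlgType K).

Lemma nmulZr (a : K) (u v : X) : nmul u (a *: v) = a *: nmul u v.
Proof. by rewrite nmulC nmulZl nmulC. Qed.

Lemma nmulDr : right_distributive (@nmul K X) +%R.
Proof. by move=> u v w; rewrite nmulC nmulDl !(nmulC u). Qed.

Lemma nmul0l (u : X) : nmul 0 u = 0.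
Proof. by rewrite -(scale0r 0) nmulZl !scale0r. Qed.

End NUComAlgTheory.

(* Evaluation of polynomials in X is made a ring morphism by passing through
   the unitization K x X, with product (a, u) (b, v) = (ab, a v + b u + u v). *)
Section Unitization.
Variables (K : numFieldType) (X : nuComAlgType K).

Definition unitz := (K * X)%type.
HB.instance Definition _ := GRing.Zmodule.on unitz.

Definition umul (p q : unitz) : unitz :=
  (p.1 * q.1, p.1 *: q.2 + q.1 *: p.2 + nmul p.2 q.2).

Lemma umulA : associative umul.
Proof.
move=> [a u] [b v] [c w]; rewrite /umul /=; congr (_, _); first exact: mulrA.
rewrite !scalerDr !nmulDl !nmulDr !nmulZl !nmulZr !scalerA nmulA.
rewrite (mulrC c a) (mulrC c b) -!addrA; congr (_ + _); congr (_ + _).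
rewrite addrCA; congr (_ + _); rewrite [RHS]addrCA; congr (_ + _).
by rewrite addrCA.
Qed.

Lemma umulC : commutative umul.
Proof.
move=> [a u] [b v]; rewrite /umul /=; congr (_, _); first exact: mulrC.
by rewrite nmulC (addrC (a *: v)).
Qed.

Lemma umul1 : left_id (1, 0) umul.
Proof. by move=> [a u]; rewrite /umul /= mul1r scale1r scaler0 nmul0l !addr0. Qed.

Lemma umulDl : left_distributive umul +%R.
Proof.
move=> [a u] [b v] [c w]; rewrite /umul /=; congr (_, _); first exact: mulrDl.
rewrite scalerDl scalerDr nmulDl -!addrA; congr (_ + _); rewrite addrCA.
congr (_ + _); rewrite !addrA; congr (_ + _).
by rewrite addrC -!addrA; congr (_ + _); rewrite addrC.
Qed.

Lemma unitz1_neq0 : ((1, 0) : unitz) != 0.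
Proof. by apply/eqP => -[] /eqP; rewrite oner_eq0. Qed.

HB.instance Definition _ :=
  GRing.Zmodule_isComNzRing.Build unitz umulA umulC umul1 umulDl unitz1_neq0.

Definition uscalar (a : K) : unitz := (a, 0).
Definition uembed (y : X) : unitz := (0, y).

Lemma uscalar_is_zmod_morphism : zmod_morphism uscalar.
Proof. by move=> a c; rewrite /uscalar; congr (_, _); rewrite subr0. Qed.

Lemma uscalar_is_monoid_morphism : monoid_morphism uscalar.
Proof.
by split=> // a b; rewrite /uscalar /GRing.mul /= /umul /= !scaler0 nmul0l !addr0.
Qed.

HB.instance Definition _ :=
  GRing.isZmodMorphism.Build K unitz uscalar uscalar_is_zmod_morphism.
HB.instance Definition _ :=
  GRing.isMonoidMorphism.Build K unitz uscalar uscalar_is_monoid_morphism.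

Lemma uscalarM (a : K) (p : unitz) : uscalar a * p = (a * p.1, a *: p.2).
Proof. by case: p => b v; rewrite /GRing.mul /= /umul /= scaler0 nmul0l !addr0. Qed.

Lemma fst_usum (I : Type) (r : seq I) (F : I -> unitz) :
  (\sum_(i <- r) F i).1 = \sum_(i <- r) (F i).1.
Proof. exact: (big_morph (fun p : unitz => p.1) (id1 := 0) (op1 := +%R)). Qed.

Lemma snd_usum (I : Type) (r : seq I) (F : I -> unitz) :
  (\sum_(i <- r) F i).2 = \sum_(i <- r) (F i).2.
Proof. exact: (big_morph (fun p : unitz => p.2) (id1 := 0) (op1 := +%R)). Qed.

Lemma uprod_uembed (s : seq X) :
  \prod_(y <- s) uembed y = ((size s == 0%N)%:R, nprod s).
Proof.
case: s => [|a l]; first by rewrite big_nil.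
rewrite big_cons /=; elim: l a => [|c l IH] a; first by rewrite big_nil mulr1.
rewrite big_cons mulrA -IH; congr (_ * _).
by rewrite /GRing.mul /= /umul /= mulr0 !scale0r !add0r.
Qed.

Section Evaluation.
Variables (n : nat) (x : 'I_n -> X).

Definition ueval (P : {mpoly K[n]}) : unitz := mmap uscalar (uembed \o x) P.

Lemma mmap1_uembed (m : 'X_{1..n}) :
  mmap1 (uembed \o x) m = ((m == 0%MM)%:R, mono_eval m x).
Proof.
rewrite /mono_eval -mdeg_eq0 mdegE.
set s := flatten _; have -> : mmap1 (uembed \o x) m = \prod_(y <- s) uembed y.
  rewrite big_flatten big_map big_enum /mmap1.
  by apply: eq_bigr => i _; rewrite big_nseq iter_mulr_1.
rewrite uprod_uembed size_flatten /shape -map_comp sumnE big_map big_enum /=.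
by under eq_bigr do rewrite size_nseq.
Qed.

Lemma uevalE (P : {mpoly K[n]}) : ueval P = (P@_0%MM, peval P x).
Proof.
rewrite /ueval /mmap; under eq_bigr do rewrite mmap1_uembed uscalarM /=.
rewrite [LHS]surjective_pairing fst_usum snd_usum; congr (_, _).
have [P0|P0] := boolP (0%MM \in msupp P).
  rewrite (bigD1_seq 0%MM) ?msupp_uniq //= eqxx mulr1 big1 ?addr0 // => m.
  by move=> /negbTE ->; rewrite mulr0.
rewrite big1_seq ?(memN_msupp_eq0 P0) // => m /andP[_ mP].
by case: eqP mP P0 => [->->//|_ _ _]; rewrite mulr0.
Qed.

End Evaluation.
End Unitization.

Section PolyEval.
Variables (K : numFieldType) (X : nuComAlgType K).

Section PevalAt.
Variables (n : nat) (x : 'I_n -> X).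
Implicit Types P Q : {mpoly K[n]}.

Lemma pevalE P : peval P x = (ueval x P).2.
Proof. by rewrite uevalE. Qed.

Lemma peval0 : peval (0 : {mpoly K[n]}) x = 0.
Proof. by rewrite pevalE /ueval rmorph0. Qed.

Lemma pevalD P Q : peval (P + Q) x = peval P x + peval Q x.
Proof. by rewrite !pevalE /ueval rmorphD. Qed.

Lemma pevalB P Q : peval (P - Q) x = peval P x - peval Q x.
Proof. by rewrite !pevalE /ueval rmorphB. Qed.

Lemma pevalZ c P : peval (c *: P) x = c *: peval P x.
Proof. by rewrite !pevalE /ueval mmapZ uscalarM. Qed.

Lemma pevalC c : peval (c%:MP : {mpoly K[n]}) x = 0.
Proof. by rewrite pevalE /ueval mmapC. Qed.

Lemma pevalXU i : peval ('X_i : {mpoly K[n]}) x = x i.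
Proof. by rewrite pevalE /ueval mmapX mmap1U. Qed.

Lemma pevalXn i k : peval ('X_i ^+ k : {mpoly K[n]}) x = nprod (nseq k (x i)).
Proof.
rewrite pevalE /ueval rmorphXn /= mmapX mmap1U /=.
by have := uprod_uembed (nseq k (x i)); rewrite big_nseq iter_mulr_1 => ->.
Qed.

Lemma pevalM P Q : P@_0%MM = 0 -> Q@_0%MM = 0 ->
  peval (P * Q) x = nmul (peval P x) (peval Q x).
Proof.
move=> P0 Q0; rewrite [LHS]pevalE.
have -> : ueval x (P * Q) = ueval x P * ueval x Q by exact: rmorphM.
by rewrite !uevalE P0 Q0 /GRing.mul /= /umul /= !scale0r !add0r.
Qed.

Lemma peval_drop_const P : peval (drop_const P) x = peval P x.
Proof. by rewrite pevalB pevalC subr0. Qed.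

End PevalAt.

Lemma peval_comp n k (x : 'I_k -> X) (P : {mpoly K[n]})
    (lq : n.-tuple {mpoly K[k]}) : (forall i, (tnth lq i)@_0%MM = 0) ->
  peval (P \mPo lq) x = peval P (fun i => peval (tnth lq i) x).
Proof.
move=> lq0; rewrite !pevalE; congr (_.2).
rewrite comp_mpolyEX /ueval raddf_sum [in RHS]/mmap /=; apply: eq_bigr => m _.
rewrite comp_mpolyX mmapZ rmorph_prod /mmap1; apply: congr2 => //; apply: eq_bigr.
move=> i _; rewrite rmorphXn; congr (_ ^+ _).
change (ueval x (tnth lq i) = uembed (peval (tnth lq i) x)).
by rewrite uevalE lq0.
Qed.

Lemma peval_mrename n n' (sigma : 'I_n -> 'I_n') (P : {mpoly K[n]}) (z : 'I_n' -> X) :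
  peval (mrename sigma P) z = peval P (z \o sigma).
Proof.
rewrite peval_comp => [|i]; last by rewrite tnth_mktuple mcoeffX mnm1_eq0.
by congr (peval P _); apply: funext => i; rewrite tnth_mktuple pevalXU.
Qed.

End PolyEval.

Section PolyExpr.
Variables (K : numFieldType) (X : nuComAlgType K).

Definition poly_expr (S : set X) (d : nat) (y : X) :=
  exists n (a : 'I_n -> X) (P : {mpoly K[n]}),
    [/\ forall i, S (a i), no_const P, (msize P <= d)%N & y = peval P a].

Lemma poly_expr0 (S : set X) d : poly_expr S d 0.
Proof.
exists 0%N, (fun=> 0), 0.
by split; [case | exact: mcoeff0 | rewrite msize0 | rewrite peval0].
Qed.

Lemma undup_tuple (S : set X) (L : seq X) : (forall u, u \in L -> S u) ->
  exists n (z : 'I_n -> X), [/\ injective z, forall i, S (z i)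
    & forall u, u \in L -> exists i, z i = u].
Proof.
move=> LS; set s := undup L; exists (size s), (fun i => nth 0 s i); split.
- move=> i j /eqP; rewrite nth_uniq ?undup_uniq // => /eqP h.
  exact: val_inj.
- by move=> i; apply: LS; rewrite -mem_undup; apply: mem_nth.
- move=> u uL; have us : u \in s by rewrite mem_undup.
  by exists (Ordinal (etrans (index_mem u s) us)); rewrite /= nth_index.
Qed.

Lemma peval_reindex n m (z : 'I_n -> X) (a : 'I_m -> X) (P : {mpoly K[m]}) :
  (forall i, exists i', z i' = a i) -> no_const P ->
  exists Q : {mpoly K[n]},
    [/\ no_const Q, (msize Q <= msize P)%N & peval P a = peval Q z].
Proof.
move=> /choice [sigma zsigma] P0; exists (mrename sigma P); split.
- exact: mrename_no_const.
- exact: msize_mrename.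
- by rewrite peval_mrename; congr (peval P _); apply: funext => i; rewrite /= zsigma.
Qed.

Lemma poly_expr_common k (S : set X) (d : 'I_k -> nat) (y : 'I_k -> X) (L : seq X) :
    (forall j, poly_expr S (d j) (y j)) -> (forall u, u \in L -> S u) ->
  exists n (z : 'I_n -> X) (P : 'I_k -> {mpoly K[n]}),
    [/\ injective z, (forall i, S (z i)), (forall u, u \in L -> exists i, z i = u)
      & forall j, [/\ no_const (P j), (msize (P j) <= d j)%N & y j = peval (P j) z]].
Proof.
move=> yS LS.
have /choice [w wP] : forall j, exists v : {m : nat & (('I_m -> X) * {mpoly K[m]})%type},
    [/\ forall i, S ((projT2 v).1 i), no_const (projT2 v).2,
      (msize (projT2 v).2 <= d j)%N & y j = peval (projT2 v).2 (projT2 v).1].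
  by move=> j; have [m [a [P yP]]] := yS j; exists (existT _ m (a, P)).
pose a j := [seq (projT2 (w j)).1 i | i <- enum 'I_(projT1 (w j))].
pose La := flatten [seq a j | j <- enum 'I_k].
have La_w j i : (projT2 (w j)).1 i \in La.
  by apply/flattenP; exists (a j); apply: map_f; rewrite mem_enum.
have [n [z [zinj zS zL]]] : exists n (z : 'I_n -> X), [/\ injective z, forall i, S (z i)
    & forall u, u \in La ++ L -> exists i, z i = u].
  apply: undup_tuple => u.
  rewrite mem_cat => /orP[/flattenP [s /mapP [j _ ->]]|/LS //].
  by move=> /mapP [i _ ->]; case: (wP j).
have /choice [P zP] : forall j, exists P : {mpoly K[n]},
    [/\ no_const P, (msize P <= d j)%N & y j = peval P z].
  move=> j; case: (wP j) => _ P0 Pd ->.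
  have zw i : exists i', z i' = (projT2 (w j)).1 i by apply: zL; rewrite mem_cat La_w.
  have [Q [Q0 QP ->]] := peval_reindex zw P0.
  by exists Q; split=> //; apply: leq_trans QP Pd.
by exists n, z, P; split=> // u uL; apply: zL; rewrite mem_cat uL orbT.
Qed.

Lemma poly_expr_pair (S : set X) d1 d2 u v : poly_expr S d1 u -> poly_expr S d2 v ->
  exists n (z : 'I_n -> X) (P Q : {mpoly K[n]}),
    [/\ forall i, S (z i), no_const P, no_const Q, u = peval P z & v = peval Q z].
Proof.
move=> hu hv.
pose d (j : 'I_2) := if j == ord0 then d1 else d2.
pose y (j : 'I_2) := if j == ord0 then u else v.
have [||n [z [P [_ zS _ zP]]]] := @poly_expr_common 2 S d y [::] => //.
  by move=> j; rewrite /d /y; case: eqP.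
have [P0 _] := zP ord0; have [Q0 _] := zP ord_max.
by exists n, z, (P ord0), (P ord_max).
Qed.

Lemma gen_subalg_poly_expr (S : set X) y : gen_subalg S y -> exists d, poly_expr S d y.
Proof.
move/(_ [set y | exists d, poly_expr S d y]); apply; split; [split|].
- by exists 0%N; apply: poly_expr0.
- move=> u v [d1 hu] [d2 hv].
  have [n [z [P [Q [zS P0 Q0 -> ->]]]]] := poly_expr_pair hu hv.
  exists (msize (P + Q)), n, z, (P + Q); split=> //; last by rewrite pevalD.
  by rewrite /no_const mcoeffD P0 Q0 addr0.
- move=> c u [d [n [a [P [aS P0 Pd ->]]]]]; exists d, n, a, (c *: P); split=> //.
  + by rewrite /no_const mcoeffZ P0 mulr0.
  + exact: leq_trans (msizeZ_le _ _) Pd.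
  + by rewrite pevalZ.
- move=> u v [d1 hu] [d2 hv].
  have [n [z [P [Q [zS P0 Q0 -> ->]]]]] := poly_expr_pair hu hv.
  exists (msize (drop_const (P * Q))), n, z, (drop_const (P * Q)).
  by split=> //; [exact: mcoeff0_drop_const | rewrite peval_drop_const pevalM].
- move=> u Su; exists (msize ('X_0 : {mpoly K[1]})), 1%N, (fun=> u), 'X_0.
  by split=> //; [rewrite /no_const mcoeffX mnm1_eq0 | rewrite pevalXU].
Qed.

Lemma poly_expr_injective (S : set X) d y : poly_expr S d y ->
  exists n (z : 'I_n -> X) (P : {mpoly K[n]}),
    [/\ injective z, forall i, S (z i), no_const P & y = peval P z].
Proof.
move=> hy; have [||n [z [P [z_inj zS _ zP]]]] :=
  @poly_expr_common 1 S (fun=> d) (fun=> y) [::] => //.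
by have [P0 _ ->] := zP ord0; exists n, z, (P ord0).
Qed.

Lemma sub_gen_subalg (S : set X) : S `<=` gen_subalg S.
Proof. by move=> y Sy Y [_]; apply. Qed.

Lemma gen_subalg0 (S : set X) : gen_subalg S 0.
Proof. by move=> Y [[]]. Qed.

End PolyExpr.

Section FreePerturbation.
Variables (K : numFieldType) (X : nuComAlgType K) (A : set X).
Hypothesis sfgA : SFG A.

(* The monomial produced by [mcoeff_comp_perturb] involves a perturbing
   variable, so it cannot be cancelled by Q. *)
Lemma peval_perturb_neq n k (z : 'I_n -> X) (tau : 'I_k -> 'I_n) (N : 'I_k -> nat)
    (t : 'I_k -> K) (R : 'I_k -> {mpoly K[n]}) (Q : {mpoly K[n]}) (P : {mpoly K[k]}) :
    injective z -> (forall i, A (z i)) -> injective tau -> (forall j, 0 < N j)%N ->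
    (forall j, t j != 0) -> (forall j, no_const (R j)) ->
    (forall j, msize (R j) <= N j)%N ->
    (forall (M : 'X_{1..n}) j, M (tau j) != 0%N -> Q@_M = 0) -> P != 0 -> no_const P ->
  peval P (fun j => peval (R j) z + t j *: nprod (nseq (N j) (z (tau j)))) != peval Q z.
Proof.
move=> zinj zA tau_inj N_gt0 t_neq0 R0 RN Q_out P_neq0 P0.
have [M [j Mj] PM] := mcoeff_comp_perturb tau_inj N_gt0 t_neq0 RN P_neq0 P0.
set S := perturb_tuple tau N t R in PM.
have S0 i : (tnth S i)@_0%MM = 0.
  by rewrite tnth_mktuple mcoeffD mcoeffZ mcoeff0_Xn // mulr0 addr0 R0.
have -> : (fun j => peval (R j) z + t j *: nprod (nseq (N j) (z (tau j)))) =
    (fun j => peval (tnth S j) z).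
  by apply: funext => i; rewrite tnth_mktuple pevalD pevalZ pevalXn.
rewrite -peval_comp //; apply/eqP => E.
have M0 : M != 0%MM by apply: contra Mj => /eqP ->; rewrite mnm0E.
have D_neq0 : drop_const (P \mPo S - Q) != 0.
  apply: contraNneq PM => /(congr1 (mcoeff M)).
  by rewrite mcoeff_drop_const // mcoeffB (Q_out M j Mj) subr0 mcoeff0 => ->.
apply: (sfgA (mcoeff0_drop_const _) (elimN eqP D_neq0) zinj zA).
by rewrite peval_drop_const pevalB E subrr.
Qed.

Variables (B C : set X).
Hypotheses (BA : B `<=` A) (CA : C `<=` A) (BC : B `&` C = set0).
Variables (r : X -> X) (t : X -> K) (N : X -> nat).
Hypotheses (t_neq0 : forall c, t c != 0) (N_gt0 : forall c, (0 < N c)%N)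
  (r_expr : forall c, poly_expr A (N c) (r c)).

Definition perturb c := r c + t c *: nprod (nseq (N c) c).

(* Writing everything over one injective tuple of generators, the c j become
   perturbing variables while the generators of Q all lie in B, away from C. *)
Lemma peval_perturb_notin_gen k (P : {mpoly K[k]}) (c : 'I_k -> X) :
    injective c -> (forall j, C (c j)) -> P != 0 -> no_const P ->
  ~ gen_subalg B (peval P (perturb \o c)).
Proof.
move=> c_inj cC P_neq0 P0 /gen_subalg_poly_expr [_ [nb [b [Q [bB Q0 _ EQ]]]]].
set L := [seq c j | j <- enum 'I_k] ++ [seq b i | i <- enum 'I_nb].
have LA u : u \in L -> A u.
  by rewrite mem_cat => /orP[] /mapP [i _ ->]; [apply: CA | apply: BA].
have [n [z [R [z_inj zA zL zR]]]] := poly_expr_common (fun j => r_expr (c j)) LA.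
have /choice [tau ztau] j : exists i, z i = c j.
  by apply: zL; rewrite mem_cat map_f ?mem_enum.
have /choice [sigma zsigma] i : exists i', z i' = b i.
  by apply: zL; rewrite mem_cat orbC map_f ?mem_enum.
have tau_inj : injective tau.
  by move=> j1 j2 /(congr1 z); rewrite !ztau => /c_inj.
have Q_out (M : 'X_{1..n}) j : M (tau j) != 0%N -> (mrename sigma Q)@_M = 0.
  apply: mcoeff_mrename_out => i; apply/eqP => sigma_tau.
  suff : (B `&` C) (b i) by rewrite BC.
  by split; [exact: bB | rewrite -zsigma sigma_tau ztau].
have R0 j : no_const (R j) by case: (zR j).
have RN j : (msize (R j) <= N (c j))%N by case: (zR j).
move/negP: (peval_perturb_neq z_inj zA tau_inj (fun j => N_gt0 (c j))
  (fun j => t_neq0 (c j)) R0 RN Q_out P_neq0 P0); apply; apply/eqP.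
rewrite peval_mrename (_ : z \o sigma = b) -?EQ; last exact: funext.
congr (peval P _); apply: funext => j /=.
by rewrite /perturb ztau; case: (zR j) => _ _ ->.
Qed.

Lemma perturb_inj : {in C &, injective perturb}.
Proof.
move=> c1 c2 /set_mem C1 /set_mem C2 e; apply: contrapT => /eqP c12.
pose c (j : 'I_2) := nth 0 [:: c1; c2] j.
have c_inj : injective c.
  by move=> i j /eqP; rewrite nth_uniq //= ?inE ?andbT // => /eqP/val_inj.
have cC j : C (c j) by case: j => -[|[|//]].
pose P : {mpoly K[2]} := 'X_ord0 - 'X_ord_max.
have P0 : no_const P by rewrite /no_const mcoeffB !mcoeffX !mnm1_eq0 subrr.
have P_neq0 : P != 0.
  apply/eqP => /(congr1 (mcoeff U_(ord0)%MM)).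
  by rewrite mcoeffB !mcoeffX eqxx eq_mnm1 /= subr0 mcoeff0 => /eqP; rewrite oner_eq0.
apply: (peval_perturb_notin_gen c_inj cC P_neq0 P0).
by rewrite pevalB !pevalXU /= e subrr; exact: gen_subalg0.
Qed.

Lemma peval_perturb_image_notin_gen n (P : {mpoly K[n]}) (x : 'I_n -> X) :
    injective x -> (forall i, (perturb @` C) (x i)) -> P != 0 -> no_const P ->
  ~ gen_subalg B (peval P x).
Proof.
move=> x_inj xF P_neq0 P0.
have /choice [c cx] i : exists c, C c /\ perturb c = x i.
  by have [c Cc <-] := xF i; exists c.
have -> : x = perturb \o c by apply: funext => i; rewrite /= (cx i).2.
apply: peval_perturb_notin_gen => // [i j e|i]; last exact: (cx i).1.
by apply: x_inj; rewrite -(cx i).2 -(cx j).2 e.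
Qed.

Lemma SFG_perturb : SFG (perturb @` C).
Proof.
move=> n P P0 /eqP P_neq0 x x_inj xF Px0.
apply: (peval_perturb_image_notin_gen x_inj xF P_neq0 P0).
by rewrite Px0; exact: gen_subalg0.
Qed.

Lemma gen_subalg_perturb : gen_subalg (perturb @` C) `<=` ~` gen_subalg B `|` [set 0].
Proof.
move=> y /gen_subalg_poly_expr [d] /poly_expr_injective [n [x [P [x_inj xF P0 ->]]]].
have [->|y_neq0] := eqVneq (peval P x) 0; [by right | left].
apply: (peval_perturb_image_notin_gen x_inj xF _ P0).
by apply: contraNneq y_neq0 => ->; rewrite peval0.
Qed.

End FreePerturbation.

Lemma card_le_injfun (T U : Type) (A : set T) (B : set U) (u0 : U) : (A #<= B)%card ->
  exists2 g : T -> U, set_fun A B g & set_inj A g.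
Proof.
move/card_leP => [f].
exists (fun a => if pselect (A a) is left Aa then val (f (SigSub (mem_set Aa))) else u0).
  by move=> a Aa; case: pselect => // Aa'; apply: set_valP.
move=> a1 a2 /set_mem A1 /set_mem A2; case: pselect => // A1'; case: pselect => // A2'.
by move/val_inj/(@inj _ _ _ f _ _ (in_setT _) (in_setT _)) => -[].
Qed.

Lemma dense_from_base (T : topologicalType) (Bs : set_system T) (S : set T) :
  is_base Bs -> (forall U, Bs U -> U !=set0 -> U `&` S !=set0) -> dense S.
Proof.
move=> [_ Bs_cover] hit O [x Ox] oO; have [D DBs OD] := Bs_cover O oO.
rewrite OD in Ox *; have [V DV Vx] := Ox.
have [y [Vy Sy]] := hit V (DBs V DV) (ex_intro _ x Vx).
by exists y; split=> //; exists V.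
Qed.

Section Topological.
Variables (K : numFieldType) (X : topNUComAlgType K).
Hypotheses (add_cont : continuous (fun q : X * X => q.1 + q.2))
  (scale_cont : continuous (fun q : K * X => q.1 *: q.2)).

Lemma open_small_perturbation (U : set X) (p y : X) :
  open U -> U p -> exists2 s : K, s != 0 & U (p + s *: y).
Proof.
move=> oU Up.
have sy0 : (fun s : K => s *: y) @ nbhs (0 : K) --> (0 : K) *: y.
  apply: (cvg_comp2 (h := fun (a : K) (v : X) => a *: v) cvg_id (cvg_cst y)).
  exact: (@scale_cont (0, y)).
have psy : (fun s : K => p + s *: y) @ nbhs (0 : K) --> p + (0 : K) *: y.
  apply: (cvg_comp2 (h := fun a b : X => a + b) (cvg_cst p) sy0).
  exact: (@add_cont (p, 0 *: y)).
rewrite scale0r addr0 in psy.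
have /psy /nbhs_ballP [e /= e_gt0 he] : nbhs p U by apply: open_nbhs_nbhs.
exists (e / 2); first by rewrite mulf_neq0 ?invr_eq0 ?pnatr_eq0 // gt_eqF.
apply: he; rewrite /ball /= sub0r normrN ger0_norm ?divr_ge0 ?ler0n ?ltW //.
by rewrite ltr_pdivrMr ?ltr0n // ltr_pMr // ltr1n.
Qed.

Lemma exists_perturbation (A : set X) (Bs : set_system X) (g : set X -> X) :
    gen_subalg A = setT -> (forall U, Bs U -> open U) -> set_inj Bs g ->
  exists r t N, [/\ forall c, t c != 0, forall c, (0 < N c)%N,
    forall c, poly_expr A (N c) (r c)
    & forall U, Bs U -> U !=set0 -> U (perturb r t N (g U))].
Proof.
move=> genA Bs_open g_inj.
have /choice [v vP] c : exists v : X * K * nat, [/\ v.1.2 != 0, (0 < v.2)%N,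
    poly_expr A v.2 v.1.1
    & forall U, Bs U -> U !=set0 -> g U = c -> U (v.1.1 + v.1.2 *: nprod (nseq v.2 c))].
  case: (pselect (exists U, [/\ Bs U, U !=set0 & g U = c])) => [[U [BsU [p Up] gU]]|noU].
    have /gen_subalg_poly_expr [_ [n [a [R [aA R0 _ pR]]]]] : gen_subalg A p.
      by rewrite genA.
    have [s s_neq0 Us] :=
      open_small_perturbation (nprod (nseq (msize R).+1 c)) (Bs_open U BsU) Up.
    exists (p, s, (msize R).+1); split=> //; first by exists n, a, R.
    by move=> V BsV _ gV; rewrite (g_inj V U) ?inE ?gV.
  exists (0, 1, 1%N); split=> //; [exact: oner_neq0 | exact: poly_expr0 |].
  by move=> U BsU U0 gU; case: noU; exists U.
exists (fun c => (v c).1.1), (fun c => (v c).1.2), (fun c => (v c).2).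
split=> [c|c|c|U BsU U0]; try by case: (vP c).
by case: (vP (g U)) => _ _ _; apply.
Qed.

End Topological.

Theorem theorem4p3 (R : realType) (b : bool) (X : topNUComAlgType (Kfield R b))
    (A B C : set X) :
  topological_algebra X ->
  free_with_SFG A ->
  A = B `|` C -> B `&` C = set0 ->
  infinite_set C ->
  weight_le X C ->
  strongly_dense_algebrable C (~` gen_subalg B).
Proof.
move=> [add_cont _ scale_cont] [sfgA genA] ABC BC _ [Bs Bs_base BsC].
have BA : B `<=` A by rewrite ABC; exact: subsetUl.
have CA : C `<=` A by rewrite ABC; exact: subsetUr.
have [g gC g_inj] := card_le_injfun 0 BsC.
have [r [t [N [t_neq0 N_gt0 r_expr hit]]]] :=
  exists_perturbation add_cont scale_cont genA Bs_base.1 g_inj.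
exists (perturb r t N @` C); split.
- exact: (SFG_perturb sfgA BA CA BC t_neq0 N_gt0 r_expr).
- exact/inj_card_eq/(perturb_inj sfgA BA CA BC t_neq0 N_gt0 r_expr).
- apply: (dense_from_base Bs_base) => U BsU U0.
  exists (perturb r t N (g U)); split; first exact: hit.
  by apply: sub_gen_subalg; exists (g U) => //; exact: gC.
- exact: (gen_subalg_perturb sfgA BA CA BC t_neq0 N_gt0 r_expr).
Qed.
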